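(* $\frac{n^2}{6}+O(n)\le\mathrm{sat}_\circlearrowright(n,D_1)\le\frac{n^2}{4}+O(n)$.
   Context: $\Omega_n=\{v_0,\dots,v_{n-1}\}$ with cyclic order $v_0<\dots<v_{n-1}<v_0$ (indices mod $n$). A $3$-cgh on $\Omega_n$ is a family of $3$-subsets of $\Omega_n$. For a $3$-cgh $F$, $H$ contains a copy of $F$ if there is an injection of the vertex set of $F$ into $\Omega_n$ preserving the cyclic order and mapping every edge of $F$ to an edge of $H$. $H$ is $F$-saturated if it contains no copy of $F$ but $H\cup\{e\}$ does for every $e\in\binom{\Omega_n}{3}\setminus H$; $\mathrm{sat}_\circlearrowright(n,F)$ is the minimum number of edges of an $F$-saturated $3$-cgh on $\Omega_n$. $D_1$ is the $3$-cgh on $\Omega_4$ with edges $\{v_0,v_1,v_2\}$ and $\{v_0,v_2,v_3\}$ (two triples sharing a pair whose remaining vertices lie on opposite sides of the chord through the shared pair). *)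

From mathcomp Require Import all_boot all_order all_algebra.
Set Implicit Arguments. Unset Strict Implicit. Unset Printing Implicit Defensive.

(* Vertices of Omega_n are 'I_n, vertex v_i being i; the cyclic order is
   0 < 1 < ... < n-1 < 0.  A 3-cgh on Omega_n is a family of 3-subsets. *)

(* f : 'I_k -> 'I_n preserves the cyclic order: after rotating Omega_n by
   some r, the images of v_0, ..., v_{k-1} are strictly increasing.
   (This forces f to be injective.)  Boolean (finite quantifiers). *)
Definition cyc_preserving (k n : nat) (f : 'I_k -> 'I_n) : bool :=
  [exists r : 'I_n, [forall i : 'I_k, forall j : 'I_k, (i < j)%N ==>
    ((f i + n - r) %% n < (f j + n - r) %% n)%N]].

Definition contains_copy (k n : nat) (F : {set {set 'I_k}})
    (H : {set {set 'I_n}}) : bool :=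
  [exists f : {ffun 'I_k -> 'I_n}, cyc_preserving f &&
    [forall e in F, f @: e \in H]].

Definition saturated (k n : nat) (F : {set {set 'I_k}})
    (H : {set {set 'I_n}}) : bool :=
  [&& [forall e in H, #|e| == 3], ~~ contains_copy F H &
      [forall e : {set 'I_n}, ((#|e| == 3) && (e \notin H)) ==>
        contains_copy F (e |: H)]].

(* The default value 'C(n,3) is an upper bound for #|H| of any
   3-cgh H, so the big minimum is the true minimum whenever an F-saturated
   3-cgh exists (which is always the case: take a maximal F-free one). *)
Definition sat_circ (k n : nat) (F : {set {set 'I_k}}) : nat :=
  \big[minn/'C(n, 3)]_(H : {set {set 'I_n}} | saturated F H) #|H|.

Definition D1 : {set {set 'I_4}} :=
  [set [set inord 0; inord 1; inord 2];
       [set inord 0; inord 2; inord 3]].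

From mathcomp Require Import all_boot all_order all_algebra.
From mathcomp Require Import zify ring lra.

(* Upper bound: take every triple {p, p+1, r} with p odd and r beyond p+1, together with the
   triples {0, q, q+1} with q odd.  This fan graph is D1-saturated and has about n^2/4 edges.

   Lower bound: fix a saturated H and a vertex j, and let v_1, ..., v_(n-1) be the other
   vertices clockwise from j.  Call t inner (resp. outer) if some edge {j, v_t, w} has w
   before (resp. after) v_t.  D1-freeness forbids t to be both, and saturation applied to a
   missing triple {j, v_t, v_(t+1)} makes t inner or t+1 outer.  Scanning t upwards, the
   offsets that are inner or outer and the consecutive edges {j, v_t, v_(t+1)} number at
   least n - 4.  Charging each of these n (n - 4) pairs (j, t) injectively to an edge with
   an ordered pair of its vertices, of which there are 6 |H|, gives n (n - 4) <= 6 |H|. *)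

Section CyclicOffset.
Context {n : nat}.
Implicit Types (a b c d r s x y : 'I_n) (H : {set {set 'I_n}}).

Definition offset r x : nat := (x + n - r) %% n.

Lemma offsetE r x : offset r x = if (r <= x)%N then x - r else x + n - r.
Proof.
rewrite /offset; have := ltn_ord x; have := ltn_ord r.
case: (leqP r x) => rx rn xn; last by rewrite modn_small //; lia.
have -> : x + n - r = (x - r) + n by lia.
by rewrite modnDr modn_small //; lia.
Qed.

Lemma offsetrr r : offset r r = 0.
Proof. by rewrite offsetE leqnn subnn. Qed.

Lemma offset_inj r : injective (offset r).
Proof.
move=> x y; rewrite !offsetE => Exy; apply/val_inj => /=; move: Exy.
have := ltn_ord x; have := ltn_ord r; have := ltn_ord y.
case: (leqP r x); case: (leqP r y); lia.
Qed.

Definition increasing4 (f : 'I_n -> nat) a b c d :=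
  f a < f b /\ f b < f c /\ f c < f d.

Definition rot4 (P : 'I_n -> 'I_n -> 'I_n -> 'I_n -> Prop) a b c d :=
  P a b c d \/ P b c d a \/ P c d a b \/ P d a b c.

Lemma increasing4_offset_val r a b c d : increasing4 (offset r) a b c d ->
  rot4 (increasing4 (@nat_of_ord n)) a b c d.
Proof.
rewrite /rot4 /increasing4 !offsetE.
have := ltn_ord a; have := ltn_ord b; have := ltn_ord c; have := ltn_ord d.
have := ltn_ord r.
case: (leqP r a); case: (leqP r b); case: (leqP r c); case: (leqP r d); lia.
Qed.

Lemma increasing4_val_offset s a b c d : increasing4 (@nat_of_ord n) a b c d ->
  rot4 (increasing4 (offset s)) a b c d.
Proof.
rewrite /rot4 /increasing4 !offsetE.
have := ltn_ord a; have := ltn_ord b; have := ltn_ord c; have := ltn_ord d.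
have := ltn_ord s.
case: (leqP s a); case: (leqP s b); case: (leqP s c); case: (leqP s d); lia.
Qed.

Lemma increasing4_offset_rot r s a b c d : increasing4 (offset r) a b c d ->
  rot4 (increasing4 (offset s)) a b c d.
Proof.
move=> /increasing4_offset_val [h|[h|[h|h]]];
  by have := increasing4_val_offset s _ _ _ _ h; rewrite /rot4; tauto.
Qed.

End CyclicOffset.

Arguments increasing4_offset_rot {n} r s {a b c d}.

Section Triples.
Context {n : nat}.
Implicit Types (a b c p q r x : 'I_n) (e : {set 'I_n}).

Definition triple a b c : {set 'I_n} := [set a; b; c].

Lemma tripleC23 a b c : triple a b c = triple a c b.
Proof.
by apply/setP => x; rewrite /triple !inE; case: (x == a); case: (x == b); case: (x == c).
Qed.

Lemma triple_rot a b c : triple a b c = triple b c a.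
Proof.
by apply/setP => x; rewrite /triple !inE; case: (x == a); case: (x == b); case: (x == c).
Qed.

Lemma triple_mem1 a b c : a \in triple a b c.
Proof. by rewrite /triple !inE eqxx. Qed.

Lemma triple_mem2 a b c : b \in triple a b c.
Proof. by rewrite /triple !inE eqxx orbT. Qed.

Lemma triple_mem3 a b c : c \in triple a b c.
Proof. by rewrite /triple !inE eqxx orbT. Qed.

Lemma mem_triple x a b c : x \in triple a b c -> [\/ x = a, x = b | x = c].
Proof.
by rewrite /triple !inE => /orP[/orP[]|] /eqP; [exact: Or31 | exact: Or32 | exact: Or33].
Qed.

Lemma card_triple a b c : a != b -> b != c -> a != c -> #|triple a b c| = 3.
Proof.
move=> ab bc ac; rewrite /triple setUC cardsU1 cards2 !inE.
by rewrite (eq_sym c a) (eq_sym c b) (negPf ab) (negPf ac) (negPf bc).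
Qed.

Lemma triple_sorted_inj {phi : 'I_n -> nat} {p q r p' q' r'} : injective phi ->
    phi p < phi q -> phi q < phi r -> phi p' < phi q' -> phi q' < phi r' ->
  triple p q r = triple p' q' r' -> [/\ p = p', q = q' & r = r'].
Proof.
move=> phi_inj pq qr pq' qr' E.
have phi_mem x : x \in triple p q r -> phi x = phi p' \/ phi x = phi q' \/ phi x = phi r'.
  by rewrite E => /mem_triple [] ->; tauto.
have phi_mem' x : x \in triple p' q' r' -> phi x = phi p \/ phi x = phi q \/ phi x = phi r.
  by rewrite -E => /mem_triple [] ->; tauto.
have m1 := phi_mem p (triple_mem1 _ _ _).
have m2 := phi_mem q (triple_mem2 _ _ _).
have m3 := phi_mem r (triple_mem3 _ _ _).
have m4 := phi_mem' p' (triple_mem1 _ _ _).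
have m5 := phi_mem' q' (triple_mem2 _ _ _).
have m6 := phi_mem' r' (triple_mem3 _ _ _).
have e1 : phi p = phi p' by clear m2 m3 m5 m6; lia.
have e2 : phi q = phi q' by clear m1 m3 m4 m6; lia.
have e3 : phi r = phi r' by clear m1 m2 m4 m5; lia.
by split; apply: phi_inj.
Qed.

Lemma card3_triple e : #|e| = 3 -> exists p q r, [/\ p < q, q < r & e = triple p q r].
Proof.
move=> e3; have sorted_e : sorted ltn (map val (enum e)).
  rewrite -[enum _](eq_filter (mem_enum _)).
  rewrite -(eq_filter (mem_map val_inj _)) -filter_map.
  by rewrite (sorted_filter ltn_trans) // unlock val_ord_enum iota_ltn_sorted.
have size_e : size (enum e) = 3 by rewrite -cardE.
rewrite -(set_enum e).
case: (enum e) sorted_e size_e => [|p [|q [|r [|]]]] //= /andP[pq /andP[qr _]] _.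
by exists p, q, r; split => //; apply/setP => x; rewrite /triple !inE orbA.
Qed.

End Triples.

Section D1Copies.
Context {n : nat}.
Variable H : {set {set 'I_n}}.
Implicit Types (a b c d r s : 'I_n).

(* For [a, b, c, d] in cyclic order, D1 sits on them iff the two edges through one of
   the diagonals [ac], [bd] are both present. *)
Definition D1_pattern a b c d :=
  (triple a b c \in H /\ triple a c d \in H) \/
  (triple b c d \in H /\ triple b d a \in H).

Definition D1_at r :=
  exists a b c d, increasing4 (offset r) a b c d /\ D1_pattern a b c d.

Lemma D1_pattern_rot {a b c d} : D1_pattern a b c d -> D1_pattern b c d a.
Proof.
case=> [[abc acd]|[bcd bda]]; last by left.
by right; split; [rewrite -triple_rot | rewrite -2!triple_rot].
Qed.

Lemma D1_at_rot r s : D1_at r -> D1_at s.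
Proof.
move=> [a [b [c [d [inc p0]]]]].
have p1 := D1_pattern_rot p0; have p2 := D1_pattern_rot p1.
have p3 := D1_pattern_rot p2.
by case: (increasing4_offset_rot r s inc) => [?|[?|[?|?]]]; do 4 eexists; eauto.
Qed.

Lemma D1_copy_anchored {a b c d} : increasing4 (offset a) a b c d ->
  triple a b c \in H -> triple a c d \in H -> contains_copy D1 H.
Proof.
move=> [ab [bc cd]] abc acd.
pose f := [ffun i : 'I_4 => nth a [:: a; b; c; d] i].
have f_inc (i j : 'I_4) : i < j -> offset a (f i) < offset a (f j).
  rewrite !ffunE; have a0 := offsetrr a.
  by case: i => [[|[|[|[|i]]]] ?] //; case: j => [[|[|[|[|j]]]] ?] //= _; lia.
have f_cyc : cyc_preserving f.
  apply/existsP; exists a; apply/forallP => i; apply/forallP => j.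
  by apply/implyP; apply: f_inc.
apply/existsP; exists f; rewrite f_cyc /=; apply/forall_inP => e.
by rewrite !inE => /orP[] /eqP ->; rewrite !(imsetU, imsetU1, imset_set1) !ffunE /= !inordK.
Qed.

Lemma contains_D1E r : contains_copy D1 H <-> D1_at r.
Proof.
split.
  move=> /existsP[f /andP[/existsP[s /forallP f_cyc] /forall_inP f_edges]].
  have f_inc (i j : 'I_4) : i < j -> offset s (f i) < offset s (f j).
    by move=> ij; move: (forallP (f_cyc i) j); rewrite ij.
  apply: (D1_at_rot s).
  exists (f (inord 0)), (f (inord 1)), (f (inord 2)), (f (inord 3)).
  split; first by split; [|split]; apply: f_inc; rewrite !inordK.
  have e012 : [set inord 0; inord 1; inord 2] \in D1 by rewrite !inE eqxx.
  have e023 : [set inord 0; inord 2; inord 3] \in D1 by rewrite !inE eqxx orbT.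
  move: (f_edges _ e012) (f_edges _ e023).
  by rewrite !(imsetU, imsetU1, imset_set1); left.
move=> [a [b [c [d [inc [[abc acd]|[bcd bda]]]]]]].
  have a0 := offsetrr a.
  apply: (D1_copy_anchored _ abc acd).
  by case: (increasing4_offset_rot r a inc); rewrite /increasing4; lia.
have b0 := offsetrr b.
apply: (D1_copy_anchored _ bcd bda).
by case: (increasing4_offset_rot r b inc); rewrite /increasing4; lia.
Qed.

End D1Copies.

Lemma offset_val0 n (r x : 'I_n) : val r = 0 -> offset r x = x.
Proof. by move=> r0; rewrite offsetE r0 subn0. Qed.

Section FanConstruction.
Variable n : nat.
Hypothesis n_gt0 : 0 < n.
Implicit Types (p q r : 'I_n) (e : {set 'I_n}).

Definition fan_triple p q r : bool :=
  [&& p < q, q < r &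
      (odd p && (q == p.+1 :> nat)) || [&& p == 0 :> nat, odd q & r == q.+1 :> nat]].

Definition fan_graph : {set {set 'I_n}} :=
  [set e | [exists p, exists q, exists r, (e == triple p q r) && fan_triple p q r]].

Lemma fan_graphP p q r : p < q -> q < r ->
  (triple p q r \in fan_graph) = fan_triple p q r.
Proof.
move=> pq qr; apply/idP/idP => [|fan_pqr]; last first.
  by rewrite inE; apply/existsP; exists p; apply/existsP; exists q; apply/existsP; exists r;
    rewrite eqxx.
rewrite inE => /existsP[p' /existsP[q' /existsP[r' /andP[/eqP E fan']]]].
have [pq' qr'] : p' < q' /\ q' < r' by move: fan'; rewrite /fan_triple; lia.
by have [-> -> ->] := triple_sorted_inj (@ord_inj n) pq qr pq' qr' E.
Qed.

Lemma fan_graph_card3 e : e \in fan_graph -> #|e| = 3.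
Proof.
rewrite inE => /existsP[p /existsP[q /existsP[r /andP[/eqP -> fan_pqr]]]].
have [pq qr] : p < q /\ q < r by move: fan_pqr; rewrite /fan_triple; lia.
by apply: card_triple; apply/negbT/ltn_eqF; rewrite // (ltn_trans pq).
Qed.

Let o : 'I_n := Ordinal n_gt0.

Lemma fan_graph_D1_free : ~~ contains_copy D1 fan_graph.
Proof.
apply/negP => /(contains_D1E _ o) [a [b [c [d []]]]].
rewrite /increasing4 !offset_val0 // => -[ab [bc cd]].
have ac : a < c by lia.
have bd : b < d by lia.
case=> [[abc acd]|[bcd bda]].
  by move: abc acd; rewrite !fan_graphP // /fan_triple; lia.
by move: bcd bda; rewrite -(triple_rot a b d) !fan_graphP // /fan_triple; lia.
Qed.

Lemma fan_graph_D1_sat e :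
  #|e| = 3 -> e \notin fan_graph -> contains_copy D1 (e |: fan_graph).
Proof.
move=> /card3_triple[p [q [r [pq qr ->]]]]; rewrite fan_graphP // => not_fan.
apply/(contains_D1E _ o).
have old (x y z : 'I_n) : x < y -> y < z -> fan_triple x y z ->
    triple x y z \in triple p q r |: fan_graph.
  by move=> xy yz fan_xyz; rewrite setU1r // fan_graphP.
have new : triple p q r \in triple p q r |: fan_graph by rewrite setU11.
have r_lt := ltn_ord r.
have [p_odd|p_even] := boolP (odd p).
  have p1q : p.+1 < q by move: not_fan; rewrite /fan_triple; lia.
  have p1 : p.+1 < n by lia.
  exists p, (Ordinal p1), q, r; rewrite /increasing4 !offset_val0 //=.
  split; first lia.
  by left; split => //; apply: old; rewrite /fan_triple /=; lia.
have [p0|p_gt0] := posnP p.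
  have [q_odd|q_even] := boolP (odd q).
    have q1r : q.+1 < r by move: not_fan; rewrite /fan_triple; lia.
    have q1 : q.+1 < n by lia.
    exists p, q, (Ordinal q1), r; rewrite /increasing4 !offset_val0 //=.
    split; first lia.
    right; split; last by rewrite -triple_rot.
    by apply: old; rewrite /fan_triple /=; lia.
  have q1 : q.-1 < n by lia.
  exists p, (Ordinal q1), q, r; rewrite /increasing4 !offset_val0 //=.
  split; first lia.
  by left; split => //; apply: old; rewrite /fan_triple /=; lia.
have p1 : p.-1 < n by lia.
exists (Ordinal p1), p, q, r; rewrite /increasing4 !offset_val0 //=.
split; first lia.
by right; split => //; rewrite -triple_rot; apply: old; rewrite /fan_triple /=; lia.
Qed.

Lemma fan_graph_saturated : saturated D1 fan_graph.
Proof.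
apply/and3P; split; first by apply/forall_inP => e /fan_graph_card3 ->.
  exact: fan_graph_D1_free.
by apply/forallP => e; apply/implyP => /andP[/eqP e3 e_new]; apply: fan_graph_D1_sat.
Qed.

End FanConstruction.

Lemma card_bigcup_le (I T : finType) (P : pred I) (F : I -> {set T}) :
  #|\bigcup_(i | P i) F i| <= \sum_(i | P i) #|F i|.
Proof.
elim/big_rec2: _ => [|i y1 y2 _ IH]; first by rewrite cards0.
by rewrite cardsU (leq_trans (leq_subr _ _)) // leq_add2l.
Qed.

Lemma sum_odd m : \sum_(p < m) odd p = m./2.
Proof. by elim: m => [|m IH]; rewrite ?big_ord0 // big_ord_recr /= IH; lia. Qed.

Lemma sum_odd_sub_le m : 4 * \sum_(p < m) odd p * (m - p.+2) <= m * m.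
Proof.
elim: m => [|m IH]; first by rewrite big_ord0.
rewrite big_ord_recr /= [m.+1 - _](_ : _ = 0) ?muln0 ?addn0; last by lia.
have step : \sum_(p < m) odd p * (m.+1 - p.+2) <= \sum_(p < m) (odd p * (m - p.+2) + odd p).
  by apply: leq_sum => p _; case: (odd p); lia.
rewrite big_split /= sum_odd in step.
move: IH step; set S := \sum_(i < m) _ * (m - _); set S' := \sum_(i < m) _ * (m.+1 - _).
lia.
Qed.

Lemma sum_ord_gt k m : \sum_(t < m) (k < t) = m - k.+1.
Proof.
elim: m => [|m IH]; first by rewrite big_ord0.
by rewrite big_ord_recr /= IH; case: ltnP; lia.
Qed.

Lemma card_set_gt n k : #|[set r : 'I_n | k < r]| = n - k.+1.
Proof.
rewrite -sum_ord_gt -sum1_card big_mkcond; apply: eq_bigr => r _.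
by rewrite inE; case: ltnP.
Qed.

Lemma card_fan_graph {n} (n_gt0 : 0 < n) : 4 * #|fan_graph n| <= n * n + 4 * n.
Proof.
pose A := \bigcup_(p : 'I_n | odd p)
  [set triple p (ordS p) r | r in [set r : 'I_n | p.+1 < r]].
pose B := [set triple (Ordinal n_gt0) q (ordS q) | q : 'I_n].
have fan_sub : fan_graph n \subset A :|: B.
  apply/subsetP => e; rewrite inE.
  move=> /existsP[p /existsP[q /existsP[r /andP[/eqP -> fan_pqr]]]].
  have q_lt := ltn_ord q; have r_lt := ltn_ord r.
  case/and3P: fan_pqr => pq qr /orP[/andP[p_odd /eqP q_succ]|/and3P[/eqP p0 _ /eqP r_succ]].
    rewrite inE; apply/orP; left; apply/bigcupP; exists p => //.
    apply/imsetP; exists r; first by rewrite inE -q_succ.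
    by congr triple; apply: val_inj => /=; rewrite modn_small; lia.
  rewrite inE; apply/orP; right; apply/imsetP; exists q => //.
  by congr triple; apply: val_inj => /=; rewrite ?modn_small; lia.
have card_A : #|A| <= \sum_(p < n) odd p * (n - p.+2).
  apply: leq_trans (card_bigcup_le _ _ _ _) _; rewrite big_mkcond /=.
  apply: leq_sum => p _; case: (odd p) => //; rewrite mul1n.
  by apply: leq_trans (leq_imset_card _ _) _; rewrite card_set_gt.
have card_B : #|B| <= n by rewrite (leq_trans (leq_imset_card _ _)) ?card_ord.
rewrite (leq_trans (leq_mul (leqnn 4) (subset_leq_card fan_sub))) //.
rewrite (leq_trans (leq_mul (leqnn 4) (leq_card_setU A B))) //.
have := sum_odd_sub_le n; lia.
Qed.

Section ScanCount.
Variables (N : nat) (I O E : nat -> bool).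
Hypotheses (I1 : ~~ I 1) (IO_excl : forall t, t < N -> ~~ (I t && O t)).
Hypothesis EIO : forall t, 0 < t -> t.+1 < N -> [|| E t, I t | O t.+1].

Definition count_neither s := \sum_(t < s.+1) ((0 < t) && ~~ I t && ~~ O t).
Definition count_E s := \sum_(t < s) ((0 < t) && E t).

(* A [t.+1] in neither [I] nor [O] is paid for by [E t], or else [I t] holds, and then the
   previous step left a unit of slack. *)
Lemma count_neither_le s : 0 < s -> s < N ->
  count_neither s <= (count_E s).+1 /\ (count_neither s = (count_E s).+1 -> ~~ I s).
Proof.
elim: s => [//|s IH] _ sN.
have [->|s_gt0] := posnP s.
  rewrite /count_neither /count_E !big_ord_recr !big_ord0 /=.
  by split; [case: (~~ I 1 && _)|]; rewrite ?(negPf I1).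
have [le_s eq_s] := IH s_gt0 (ltnW sN).
rewrite /count_neither /count_E big_ord_recr [\sum_(t < s.+1) _]big_ord_recr /=.
rewrite -/(count_neither s) -/(count_E s) s_gt0 /=.
move: le_s eq_s; set a := count_neither s; set b := count_E s => le_s eq_s.
have := EIO _ s_gt0 sN; have := IO_excl _ sN; have := IO_excl _ (ltnW sN).
by case: (I s) eq_s; case: (E s); case: (I s.+1); case: (O s.+1) => //= *; split; lia.
Qed.

Lemma scan_count : 2 < N ->
  N - 4 <= \sum_(t < N) ((1 < t) && (t < N.-1) && (I t || O t)) +
           \sum_(t < N) ((0 < t) && (t.+1 < N) && E t).
Proof.
move=> N_gt2.
have [le_N _] := @count_neither_le N.-1 (ltac:(lia)) (ltac:(lia)).
have eA : count_neither N.-1 = \sum_(t < N) ((0 < t) && ~~ I t && ~~ O t).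
  by rewrite /count_neither prednK //; lia.
have eB : count_E N.-1 = \sum_(t < N) ((0 < t) && (t.+1 < N) && E t).
  rewrite -[in RHS](prednK (ltnW (ltnW N_gt2))) big_ord_recr /= prednK; last by lia.
  rewrite ltnn andbF addn0; apply: eq_bigr => t _.
  by rewrite (_ : t.+1 < N) ?andbT //; have := ltn_ord t; lia.
rewrite eA eB in le_N.
have split_t : \sum_(t < N) 1 <= \sum_(t < N) ((((1 < t) && (t < N.-1) && (I t || O t))
    + ((0 < t) && ~~ I t && ~~ O t)) + ((t <= 1) + (N.-2 < t))).
  by apply: leq_sum => t _; case: (I t); case: (O t) => /=; lia.
rewrite !big_split /= sum_nat_const card_ord muln1 sum_ord_gt in split_t.
have low : \sum_(t < N) (t <= 1) + \sum_(t < N) (1 < t) = N.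
  by rewrite -big_split /= -[RHS]card_ord -sum1_card; apply: eq_bigr => t _; lia.
rewrite sum_ord_gt in low; move: split_t le_N low.
set U := \sum_(t < N) (_ && (I t || O t)); set A := \sum_(t < N) (_ && ~~ O t).
set B := \sum_(t < N) (_ && E t); set X := \sum_(t < N) (t <= 1); lia.
Qed.

End ScanCount.

Lemma card_pairs n (P : 'I_n -> 'I_n -> bool) :
  #|[set p : 'I_n * 'I_n | P p.1 p.2]| = \sum_(j < n) \sum_(t < n) P j t.
Proof.
rewrite -sum1_card (eq_bigl (fun p => P p.1 p.2)) => [|p]; last by rewrite inE.
rewrite big_mkcond /= -(pair_bigA _ (fun j t => if P j t then 1 else 0)) /=.
by apply: eq_bigr => j _; apply: eq_bigr => t _; case: (P j t).
Qed.

Section LowerBound.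
Variable n : nat.
Hypothesis n_gt3 : 3 < n.
Variable H : {set {set 'I_n}}.
Hypothesis H_sat : saturated D1 H.
Implicit Types (j w : 'I_n) (e : {set 'I_n}).

Let n_gt0 : 0 < n. Proof. lia. Qed.

Lemma card_edge {e} : e \in H -> #|e| = 3.
Proof. by case/and3P: H_sat => /forall_inP H3 _ _ /H3 /eqP. Qed.

Lemma not_D1_at s : ~ D1_at H s.
Proof. by case/and3P: H_sat => _ /negP H_free _ /(contains_D1E H s). Qed.

Lemma D1_at_add {e} s : #|e| = 3 -> e \notin H -> D1_at (e |: H) s.
Proof.
case/and3P: H_sat => _ _ /forallP H_max e3 e_new; apply/contains_D1E.
by move: (H_max e); rewrite e3 eqxx e_new => /implyP; apply.
Qed.

Definition vertex_at j t : 'I_n := Ordinal (@ltn_pmod (t + j) n n_gt0).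

Arguments vertex_at : simpl never.

Lemma offset_vertex_at j t : t < n -> offset j (vertex_at j t) = t.
Proof.
move=> t_lt; rewrite offsetE /vertex_at /=; have := ltn_ord j.
case: (ltnP (t + j) n) => tj j_lt.
  by rewrite modn_small // (_ : j <= t + j) //; lia.
have -> : (t + j) %% n = t + j - n.
  by rewrite -[in LHS](subnK tj) modnDr modn_small //; lia.
by rewrite (_ : (j <= t + j - n) = false); lia.
Qed.

Lemma vertex_at_succ j t : vertex_at j t.+1 = vertex_at (vertex_at j t) 1.
Proof. by apply: val_inj; rewrite /vertex_at /= modnDmr addnA add1n. Qed.

Lemma offset_vertex_at_succ j t : offset (vertex_at j t) (vertex_at j t.+1) = 1.
Proof. by rewrite vertex_at_succ offset_vertex_at //; lia. Qed.

Lemma vertex_at_neq j t : 0 < t -> t < n -> vertex_at j t != j.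
Proof.
move=> t_gt0 t_lt; apply/eqP => E.
by move: (offset_vertex_at j _ t_lt); rewrite E offsetrr; lia.
Qed.

Definition inner_edge j t :=
  [exists w, (0 < offset j w < t) && (triple j (vertex_at j t) w \in H)].
Definition outer_edge j t :=
  [exists w, (t < offset j w) && (triple j (vertex_at j t) w \in H)].
Definition consec_edge j t := triple j (vertex_at j t) (vertex_at j t.+1) \in H.

Lemma inner_outer_excl j t : t < n -> ~~ (inner_edge j t && outer_edge j t).
Proof.
move=> t_lt; apply/negP.
move=> /andP[/existsP[w /andP[/andP[w_gt0 w_lt] jtw]] /existsP[w' /andP[w'_gt jtw']]].
apply: (not_D1_at j); exists j, w, (vertex_at j t), w'; split.
  by rewrite /increasing4 offsetrr offset_vertex_at.
by left; split; rewrite // tripleC23.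
Qed.

Lemma inner_edge1 j : ~~ inner_edge j 1.
Proof. by apply/existsP => -[w /andP[/andP[w_gt0 w_lt] _]]; lia. Qed.

(* Saturation applied to the missing edge {j, v_t, v_(t+1)}. *)
Lemma consec_inner_outer j t : 0 < t -> t.+1 < n ->
  [|| consec_edge j t, inner_edge j t | outer_edge j t.+1].
Proof.
move=> t_gt0 t_lt; have [//|e_new /=] := boolP (consec_edge j t).
have o_t := offset_vertex_at j _ (ltnW t_lt); have o_t1 := offset_vertex_at j _ t_lt.
have o_j := offsetrr j.
have e3 : #|triple j (vertex_at j t) (vertex_at j t.+1)| = 3.
  by apply: card_triple; apply/eqP => E; [move: o_t | move: o_t1 | move: o_t1];
    rewrite -E ?o_j ?o_t; lia.
have [a [b [c [d [[ab [bc cd]] pat]]]]] := D1_at_add j e3 e_new.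
have not_pat : ~ D1_pattern H a b c d by move=> old; apply: (not_D1_at j); exists a, b, c, d.
have is_e x y z : offset j x < offset j y -> offset j y < offset j z ->
    triple x y z = triple j (vertex_at j t) (vertex_at j t.+1) ->
    [/\ x = j, y = vertex_at j t & z = vertex_at j t.+1].
  by move=> xy yz E; apply: (triple_sorted_inj (offset_inj j) xy yz _ _ E); lia.
case: pat => [[abc acd]|[bcd bda]].
  rewrite !in_setU1 in abc acd.
  case/orP: abc => [/eqP E|abc].
    have [Ea Eb Ec] := is_e _ _ _ ab bc E; subst a b c.
    case/orP: acd => [/eqP E'|acd].
      by have [_ /(congr1 (offset j)) t1_t _] := is_e _ _ _ (ltn_trans ab bc) cd E'; lia.
    by apply/orP; right; apply/existsP; exists d; rewrite acd andbT; lia.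
  case/orP: acd => [/eqP E|acd]; last by case: not_pat; left.
  have [Ea Ec Ed] := is_e _ _ _ (ltn_trans ab bc) cd E; subst a c d.
  by apply/orP; left; apply/existsP; exists b; rewrite tripleC23 abc andbT; lia.
rewrite !in_setU1 in bcd bda.
case/orP: bcd => [/eqP E|bcd].
  by have [b_j _ _] := is_e _ _ _ bc cd E; move: ab; rewrite b_j o_j.
case/orP: bda => [/eqP|bda]; last by case: not_pat; right.
rewrite -(triple_rot a b d) => /(is_e _ _ _ ab (ltn_trans bc cd))[_ b_t d_t1].
by move: bc cd; rewrite b_t d_t1; lia.
Qed.

Definition edge_through j x : {set 'I_n} :=
  odflt set0 [pick e in H | (j \in e) && (x \in e)].

Lemma edge_throughP {j t} : inner_edge j t || outer_edge j t ->
  let e := edge_through j (vertex_at j t) in [/\ e \in H, j \in e & vertex_at j t \in e].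
Proof.
move=> in_out; have [w jtw] : exists w, triple j (vertex_at j t) w \in H.
  by case/orP: in_out => /existsP[w /andP[_ jtw]]; exists w.
rewrite /edge_through; case: pickP => [e /and3P[eH je te] //|no_edge].
by move: (no_edge (triple j (vertex_at j t) w)); rewrite jtw triple_mem1 triple_mem2.
Qed.

Definition flags : {set {set 'I_n} * ('I_n * 'I_n)} :=
  \bigcup_(e in H) \bigcup_(x in e) [set (e, (x, y)) | y in e :\ x].

Lemma card_flags : #|flags| <= 6 * #|H|.
Proof.
apply: leq_trans (card_bigcup_le _ _ _ _) _.
rewrite mulnC -sum_nat_const; apply: leq_sum => e eH.
apply: leq_trans (card_bigcup_le _ _ _ _) _.
have -> : 6 = \sum_(x in e) 2 by rewrite sum_nat_const (card_edge eH).
apply: leq_sum => x xe; apply: leq_trans (leq_imset_card _ _) _.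
by move: (card_edge eH); rewrite (cardsD1 x) xe; lia.
Qed.

Definition side_pairs := [set p : 'I_n * 'I_n |
  (1 < p.2 < n.-1) && (inner_edge p.1 p.2 || outer_edge p.1 p.2)].
Definition consec_pairs := [set p : 'I_n * 'I_n |
  (0 < p.2) && (p.2.+1 < n) && consec_edge p.1 p.2].

Definition side_flag (p : 'I_n * 'I_n) :=
  (edge_through p.1 (vertex_at p.1 p.2), (p.1, vertex_at p.1 p.2)).
Definition consec_flag (p : 'I_n * 'I_n) :=
  (triple p.1 (vertex_at p.1 p.2) (vertex_at p.1 p.2.+1),
   (vertex_at p.1 p.2, vertex_at p.1 p.2.+1)).

Lemma pairs_count : n * (n - 4) <= #|side_pairs| + #|consec_pairs|.
Proof.
rewrite (@card_pairs n (fun j t => (1 < t < n.-1) && (inner_edge j t || outer_edge j t))).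
rewrite (@card_pairs n (fun j t => (0 < t) && (t.+1 < n) && consec_edge j t)).
rewrite -big_split /= -[n in n * _]card_ord -sum_nat_const.
apply: leq_sum => j _; apply: scan_count; last by lia.
- exact: inner_edge1.
- exact: inner_outer_excl.
- exact: consec_inner_outer.
Qed.

Lemma side_flag_inj : {in side_pairs &, injective side_flag}.
Proof.
move=> [j t] [j' t'] _ _ E.
have := congr1 (fun f => f.2.1) E; have := congr1 (fun f => offset f.2.1 f.2.2) E.
by rewrite /= !offset_vertex_at // => /val_inj -> ->.
Qed.

Lemma consec_flag_inj : {in consec_pairs &, injective consec_flag}.
Proof.
move=> [j t] [j' t']; rewrite !inE /= => /andP[/andP[t_gt0 t_lt] _] _ E.
have /= E_t := congr1 (fun f => f.2.1) E; have /= E_t1 := congr1 (fun f => f.2.2) E.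
move/(congr1 fst): E; rewrite /= -E_t -E_t1 => E.
have : j \in triple j' (vertex_at j t) (vertex_at j t.+1) by rewrite -E triple_mem1.
case/mem_triple => [j_j'|j_t|j_t1].
- subst j'; have := congr1 (offset j) E_t.
  by rewrite !offset_vertex_at // => /val_inj ->.
- by move: (vertex_at_neq j t t_gt0 (ltnW t_lt)); rewrite -j_t eqxx.
- by move: (vertex_at_neq j t.+1 (ltn0Sn t) t_lt); rewrite -j_t1 eqxx.
Qed.

Lemma side_flag_sub : side_flag @: side_pairs \subset flags.
Proof.
apply/subsetP => _ /imsetP[[j t] + ->]; rewrite inE /= => /andP[/andP[t_gt1 t_lt] in_out].
have [eH je te] := edge_throughP in_out.
apply/bigcupP; exists (edge_through j (vertex_at j t)) => //; apply/bigcupP; exists j => //.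
apply/imsetP; exists (vertex_at j t) => //; rewrite in_setD1 te andbT.
by apply: vertex_at_neq; lia.
Qed.

Lemma consec_flag_sub : consec_flag @: consec_pairs \subset flags.
Proof.
apply/subsetP => _ /imsetP[[j t] + ->]; rewrite inE /= => /andP[/andP[t_gt0 t_lt] e_in].
apply/bigcupP; exists (triple j (vertex_at j t) (vertex_at j t.+1)) => //.
apply/bigcupP; exists (vertex_at j t); first exact: triple_mem2.
apply/imsetP; exists (vertex_at j t.+1) => //; rewrite in_setD1 triple_mem3 andbT.
by apply/eqP => /(congr1 (offset (vertex_at j t))); rewrite offset_vertex_at_succ offsetrr.
Qed.

(* The pair of a side flag is at offset [t > 1], that of a consecutive flag at offset 1. *)
Lemma side_consec_flags_disjoint :
  [disjoint side_flag @: side_pairs & consec_flag @: consec_pairs].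
Proof.
rewrite disjoints_subset; apply/subsetP => _ /imsetP[[j t] + ->].
rewrite !inE /= => /andP[/andP[t_gt1 t_lt] _]; apply/imsetP => -[[j' t'] _ E].
have /= j_t' := congr1 (fun f => f.2.1) E; have /= t_t1' := congr1 (fun f => f.2.2) E.
by move: (offset_vertex_at_succ j' t'); rewrite -j_t' -t_t1' offset_vertex_at; lia.
Qed.

Lemma card_saturated_lower : n * (n - 4) <= 6 * #|H|.
Proof.
apply: leq_trans pairs_count (leq_trans _ card_flags).
rewrite -(card_in_imset side_flag_inj) -(card_in_imset consec_flag_inj).
move: (leq_card_setU (side_flag @: side_pairs) (consec_flag @: consec_pairs)).2.
rewrite side_consec_flags_disjoint => /eqP <-.
by apply: subset_leq_card; rewrite subUset side_flag_sub consec_flag_sub.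
Qed.

End LowerBound.

Lemma sat_circ_le k n (F : {set {set 'I_k}}) (H : {set {set 'I_n}}) :
  saturated F H -> sat_circ n F <= #|H|.
Proof.
move=> satH; rewrite /sat_circ; elim: (index_enum _) (mem_index_enum H) => //= H' r IH.
rewrite inE big_cons => /predU1P[<-|/IH]; first by rewrite satH geq_minl.
by case: ifP => // _; apply: leq_trans (geq_minr _ _).
Qed.

Lemma sat_circ_ind k n (F : {set {set 'I_k}}) (P : nat -> Prop) :
  P 'C(n, 3) -> (forall H : {set {set 'I_n}}, saturated F H -> P #|H|) -> P (sat_circ n F).
Proof. by move=> P0 PH; apply: (big_ind P) => // x y Px Py; rewrite /minn; case: ifP. Qed.

Lemma binC3 n : 'C(n, 3) * 6 = n * n.-1 * n.-2.
Proof.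
have := bin_ffact n 3; rewrite (_ : 3`! = 6) // => ->.
by rewrite !ffactnS ffactn0 muln1 mulnA -subn2 -subn1 subnS.
Qed.

Lemma sat_circ_D1_lower n : 3 < n -> n * (n - 4) <= 6 * sat_circ n D1.
Proof.
move=> n_gt3; apply: (@sat_circ_ind _ n D1 (fun s => n * (n - 4) <= 6 * s)) => [|H satH].
  by rewrite [6 * _]mulnC binC3; nia.
exact: card_saturated_lower.
Qed.

Lemma sat_circ_D1_upper n : 0 < n -> 4 * sat_circ n D1 <= n * n + 4 * n.
Proof.
move=> n_gt0; apply: leq_trans _ (card_fan_graph n_gt0).
by rewrite leq_mul2l sat_circ_le // fan_graph_saturated.
Qed.

Import Order.TTheory GRing.Theory Num.Theory.
Local Open Scope ring_scope.

Theorem propositionA6 :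
  exists (C : rat) (N : nat), forall n : nat, (N <= n)%N ->
    (n%:R ^+ 2 / 6 - C * n%:R <= (sat_circ n D1)%:R :> rat) /\
    ((sat_circ n D1)%:R <= n%:R ^+ 2 / 4 + C * n%:R :> rat).
Proof.
exists 2, 4%N => n n_ge4.
have lower := sat_circ_D1_lower n n_ge4.
have upper := sat_circ_D1_upper n (leq_trans (isT : (0 < 4)%N) n_ge4).
have {lower} lower : (n * n <= 6 * sat_circ n D1 + 4 * n)%N by nia.
move: lower upper; rewrite -!(ler_nat rat) !natrD !natrM.
by have := ler0n rat n; split; lra.
Qed.
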